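(* Let $H$ be the Horn matrix. Let $A$ be a real symmetric $5\times 5$ matrix with $\langle A, H\rangle = 0$ and $A \in \partial\mathcal{CP}_5\cap \mathcal{DNN}_5^\circ$. Then $A$ has a factorization $A=BB^{\mathsf T}$ where \[ B = \begin{pmatrix} 1& 0&0& y_4& y_5+1 \\ y_1+1 & 1& 0 &0& y_5\\ y_1 & y_2+1 & 1 & 0& 0\\ 0 & y_2& y_3+1&1& 0\\ 0&0&y_3&y_4+1&1 \end{pmatrix} \operatorname{diag}(z_1,z_2,z_3,z_4,z_5) \] for some positive real numbers $y_1,\dots,y_5,z_1,\dots,z_5$.
   Context: $Sym_5$ is the space of real symmetric $5\times 5$ matrices with inner product $\langle A,B\rangle=\operatorname{trace}(A^{\mathsf T}B)$. $\mathcal{CP}_5$ is the cone of matrices $A=BB^{\mathsf T}$ with $B$ a $5\times k$ matrix with nonnegative entries (some $k$); $\mathcal{DNN}_5$ is the cone of positive semidefinite $5\times 5$ matrices with nonnegative entries. $\partial$ denotes boundary and ${}^\circ$ interior (Euclidean topology in $Sym_5$). The Horn matrix is \[H=\begin{pmatrix} 1 & -1 &1& 1& -1 \\ -1 & 1& -1 &1& 1\\ 1 & -1 & 1 & -1 & 1\\ 1 & 1& -1&1& -1\\ -1&1&1&-1&1\end{pmatrix}.\] *)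

From HB Require Import structures.
From mathcomp Require Import all_boot all_order all_algebra.
From mathcomp Require Import reals.
Set Implicit Arguments. Unset Strict Implicit. Unset Printing Implicit Defensive.
Import Order.TTheory GRing.Theory Num.Theory.
Local Open Scope ring_scope.

Section Defs.
Variable R : realType.

Definition symmetric5 (A : 'M[R]_5) : Prop := A^T = A.

Definition frob (A B : 'M[R]_5) : R := \tr (A^T *m B).

Definition fnorm (A : 'M[R]_5) : R := Num.sqrt (frob A A).

Definition CP5 (A : 'M[R]_5) : Prop :=
  exists (k : nat) (B : 'M[R]_(5, k)), (forall i j, 0 <= B i j) /\ A = B *m B^T.

Definition psd5 (A : 'M[R]_5) : Prop :=
  symmetric5 A /\ forall x : 'cV[R]_5, 0 <= (x^T *m A *m x) 0 0.

Definition DNN5 (A : 'M[R]_5) : Prop := psd5 A /\ forall i j, 0 <= A i j.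

(* interior and boundary relative to the space Sym_5 *)
Definition interior5 (S : 'M[R]_5 -> Prop) (A : 'M[R]_5) : Prop :=
  symmetric5 A /\ exists e : R, 0 < e /\
    forall X : 'M[R]_5, symmetric5 X -> fnorm (X - A) < e -> S X.

Definition closure5 (S : 'M[R]_5 -> Prop) (A : 'M[R]_5) : Prop :=
  symmetric5 A /\ forall e : R, 0 < e ->
    exists X : 'M[R]_5, symmetric5 X /\ S X /\ fnorm (X - A) < e.

Definition boundary5 (S : 'M[R]_5 -> Prop) (A : 'M[R]_5) : Prop :=
  closure5 S A /\ ~ interior5 S A.

Definition horn_entry (i j : nat) : R :=
  match i, j with
  | 0, 0 => 1 | 0, 1 => -1 | 0, 2 => 1 | 0, 3 => 1 | 0, 4 => -1
  | 1, 0 => -1 | 1, 1 => 1 | 1, 2 => -1 | 1, 3 => 1 | 1, 4 => 1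
  | 2, 0 => 1 | 2, 1 => -1 | 2, 2 => 1 | 2, 3 => -1 | 2, 4 => 1
  | 3, 0 => 1 | 3, 1 => 1 | 3, 2 => -1 | 3, 3 => 1 | 3, 4 => -1
  | 4, 0 => -1 | 4, 1 => 1 | 4, 2 => 1 | 4, 3 => -1 | 4, 4 => 1
  | _, _ => 0
  end.

Definition Horn : 'M[R]_5 := \matrix_(i < 5, j < 5) horn_entry i j.

Definition Yentry (y1 y2 y3 y4 y5 : R) (i j : nat) : R :=
  match i, j with
  | 0, 0 => 1      | 0, 3 => y4     | 0, 4 => y5 + 1
  | 1, 0 => y1 + 1 | 1, 1 => 1      | 1, 4 => y5
  | 2, 0 => y1     | 2, 1 => y2 + 1 | 2, 2 => 1
  | 3, 1 => y2     | 3, 2 => y3 + 1 | 3, 3 => 1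
  | 4, 2 => y3     | 4, 3 => y4 + 1 | 4, 4 => 1
  | _, _ => 0
  end.

Definition Ymat (y1 y2 y3 y4 y5 : R) : 'M[R]_5 :=
  \matrix_(i < 5, j < 5) Yentry y1 y2 y3 y4 y5 i j.

Definition diag5 (z1 z2 z3 z4 z5 : R) : 'M[R]_5 :=
  diag_mx (\row_(j < 5) [:: z1; z2; z3; z4; z5]`_j).

End Defs.

From HB Require Import structures.
From mathcomp Require Import all_boot all_order all_algebra.
From mathcomp Require Import reals.
From mathcomp Require Import ring lra.
Set Implicit Arguments. Unset Strict Implicit. Unset Printing Implicit Defensive.
Import Order.TTheory GRing.Theory Num.Theory.
Local Open Scope ring_scope.

(* Write <W, X> for the entrywise pairing and H for the Horn matrix.  Every nonnegative b
   lies close to a zero z of the Horn form on the nonnegative orthant, a vector of the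
   form (a, a + c, c, 0, 0) up to rotation: |b - z|^2 <= 2 b^T H b.  Hence, if W is
   nonnegative on these zeros, d W + O(1) (H + d^2 I) is copositive for every d > 0;
   pairing with points of CP_5 and passing to the closure gives <W, A> >= 0 as soon as
   <H, A> = 0.  Taking for W the rows of +-H gives (H A)_jj = 0, and a suitable family
   W_s shows that the cyclic form sum_i c_i s_i^2 - 2 sum_i A_(i,i+2) s_i s_(i+1), with
   c_i read off from A, is positive semidefinite.  Since A is interior to DNN_5 the
   entries A_(i,i+2) are positive, and a continued-fraction argument writes the form as
   sum_i (sqrt w_i s_i - A_(i,i+2) / sqrt w_i s_(i+1))^2 with w_i > 0.  Then
   y_(i+1) = A_(i,i+2) / w_i and z_i = sqrt w_i give the factorization. *)

Section ScalarFacts.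
Variable R : realFieldType.

Lemma ge0_of_ge_linear (x K : R) :
  (forall e, 0 < e -> - (K * e) <= x) -> 0 <= x.
Proof.
move=> x_ge; apply/ler_addgt0Pr => e e_gt0.
have K1_gt0 : 0 < `|K| + 1 by rewrite ltr_wpDl.
have := x_ge _ (divr_gt0 e_gt0 K1_gt0).
have : K * (e / (`|K| + 1)) <= e.
  rewrite mulrA ler_pdivrMr // mulrDr mulr1 -subr_ge0.
  have : K <= `|K| := ler_norm K.
  nra.
lra.
Qed.

Lemma lead_gt0_of_quadratic_ge0 (P C c : R) : 0 < C ->
  (forall l, 0 <= l ^+ 2 * P - 2%:R * l * C + c) -> 0 < P.
Proof.
move=> C_gt0 q_ge0; rewrite ltNge; apply/negP => P_le0.
have [l lC] : exists l, l * C = `|c| + 1.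
  by exists ((`|c| + 1) / C); rewrite divfK ?gt_eqF.
have : l ^+ 2 * P <= 0 by rewrite mulr_ge0_le0 ?sqr_ge0.
have := q_ge0 l; have := ler_norm c; have := normr_ge0 c.
lra.
Qed.

Lemma gt0_of_wronskian (k k' p p' e : R) :
  0 < k -> 0 < k' -> 0 < p' -> k * p' - k' * p = - e ^+ 2 -> 0 < p.
Proof.
move=> k_gt0 k'_gt0 p'_gt0 wr; rewrite -(pmulr_rgt0 _ k'_gt0).
have := mulr_gt0 k_gt0 p'_gt0; have := sqr_ge0 e; lra.
Qed.

End ScalarFacts.

Lemma concave_quadratic_root (R : rcfType) (a b c t1 : R) : 0 < a ->
  0 <= - a * t1 ^+ 2 + b * t1 + c ->
  exists2 t, t1 <= t & - a * t ^+ 2 + b * t + c = 0.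
Proof.
move=> a_gt0 q_ge0; pose D := b ^+ 2 + 4%:R * a * c.
have D_ge : (2%:R * a * t1 - b) ^+ 2 <= D.
  have : 0 <= 4%:R * a * (- a * t1 ^+ 2 + b * t1 + c) by rewrite !mulr_ge0 // ltW.
  rewrite /D; lra.
have sqrtD_ge : 2%:R * a * t1 - b <= Num.sqrt D.
  apply: le_trans (ler_norm _) _; rewrite -sqrtr_sqr; exact: ler_wsqrtr.
have D_ge0 : 0 <= D := le_trans (sqr_ge0 _) D_ge.
have a2_neq0 : 2%:R * a != 0 by rewrite mulf_neq0 ?gt_eqF ?pnatr_eq0.
exists ((b + Num.sqrt D) / (2%:R * a)).
  by rewrite ler_pdivlMr ?mulr_gt0 // mulrC; lra.
apply: (mulfI (mulf_neq0 a2_neq0 a2_neq0)); rewrite mulr0.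
have -> : 2%:R * a * (2%:R * a) * (- a * ((b + Num.sqrt D) / (2%:R * a)) ^+ 2
            + b * ((b + Num.sqrt D) / (2%:R * a)) + c) = a * (D - Num.sqrt D ^+ 2).
  by rewrite /D; field; rewrite gt_eqF.
by rewrite sqr_sqrtr // subrr mulr0.
Qed.

Section QuadraticForms.
Variables (R : realFieldType) (n : nat).
Implicit Types (W M : 'M[R]_n) (b u v : 'I_n -> R).

Definition bilform W u v := \sum_(i < n) \sum_(k < n) W i k * u i * v k.
Definition qform W b := bilform W b b.
Definition pairing W M := \sum_(i < n) \sum_(k < n) W i k * M i k.
Definition sqnorm b := \sum_(i < n) b i ^+ 2.
Definition copositive W := forall b, (forall i, 0 <= b i) -> 0 <= qform W b.

Lemma sqnorm_ge0 b : 0 <= sqnorm b.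
Proof. by apply: sumr_ge0 => i _; apply: sqr_ge0. Qed.

Lemma bilform_tr W u v : bilform W^T v u = bilform W u v.
Proof.
rewrite /bilform exchange_big; apply: eq_bigr => i _; apply: eq_bigr => k _.
by rewrite mxE; ring.
Qed.

Lemma qformD W1 W2 b : qform (W1 + W2) b = qform W1 b + qform W2 b.
Proof.
rewrite /qform /bilform -big_split; apply: eq_bigr => i _.
by rewrite -big_split; apply: eq_bigr => k _; rewrite mxE /=; ring.
Qed.

Lemma qformZ a W b : qform (a *: W) b = a * qform W b.
Proof.
rewrite /qform /bilform mulr_sumr; apply: eq_bigr => i _.
by rewrite mulr_sumr; apply: eq_bigr => k _; rewrite mxE; ring.
Qed.

Lemma qform1 b : qform 1%:M b = sqnorm b.
Proof.
rewrite /qform /bilform; apply: eq_bigr => i _.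
rewrite (bigD1 i) //= big1 => [|k /negPf nki]; last by rewrite mxE eq_sym nki !mul0r.
by rewrite mxE eqxx addr0 mul1r expr2.
Qed.

Lemma qform_split W b z :
  qform W b = qform W z + bilform W (fun i => b i - z i) b
                        + bilform W z (fun i => b i - z i).
Proof.
rewrite /qform /bilform -!big_split; apply: eq_bigr => i _.
by rewrite -!big_split; apply: eq_bigr => k _ /=; ring.
Qed.

Lemma bilform_lbound W u v (m d : R) :
  (forall i k, `|W i k| <= m) -> 0 <= d ->
  - (m * (n%:R * sqnorm u + n%:R * (d ^+ 2 * sqnorm v))) <= 2%:R * (d * bilform W u v).
Proof.
move=> Wm d_ge0.
have termwise (w x y : R) : `|w| <= m ->
    - (m * (x ^+ 2 + d ^+ 2 * y ^+ 2)) <= 2%:R * (d * (w * x * y)).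
  move=> wm; have m_ge0 : 0 <= m := le_trans (normr_ge0 w) wm.
  have amgm : 2%:R * (`|x| * `|d * y|) <= x ^+ 2 + d ^+ 2 * y ^+ 2.
    rewrite -exprMn -(real_normK (num_real x)) -(real_normK (num_real (d * y))).
    have := sqr_ge0 (`|x| - `|d * y|); lra.
  have : `|d * (w * x * y)| <= m * (`|x| * `|d * y|).
    rewrite (_ : d * (w * x * y) = w * (x * (d * y))); last by ring.
    by rewrite normrM -(normrM x); apply: ler_wpM2r.
  have := ler_wpM2l m_ge0 amgm; rewrite ler_norml; lra.
have -> : - (m * (n%:R * sqnorm u + n%:R * (d ^+ 2 * sqnorm v))) =
    \sum_(i < n) \sum_(k < n) - (m * (u i ^+ 2 + d ^+ 2 * v k ^+ 2)).
  under [RHS]eq_bigr => i _ do rewrite sumrN -mulr_sumr big_split /= sumr_const card_ord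
    -mulr_sumr.
  by rewrite sumrN -mulr_sumr big_split /= sumr_const card_ord sumrMnl !mulr_natl.
rewrite /bilform !mulr_sumr; apply: ler_sum => i _.
by rewrite !mulr_sumr; apply: ler_sum => k _; apply: termwise.
Qed.

Lemma pairing_mulmx_tr W k (B : 'M[R]_(n, k)) :
  pairing W (B *m B^T) = \sum_(l < k) qform W (fun i => B i l).
Proof.
rewrite /pairing /qform /bilform.
transitivity (\sum_(i < n) \sum_(l < k) \sum_(j < n) W i j * B i l * B j l).
  apply: eq_bigr => i _; rewrite exchange_big /=; apply: eq_bigr => j _.
  rewrite !mxE mulr_sumr; apply: eq_bigr => l _; rewrite !mxE; ring.
by rewrite exchange_big.
Qed.

Lemma pairing_ge0_mulmx_tr V k (B : 'M[R]_(n, k)) :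
  copositive V -> (forall i j, 0 <= B i j) -> 0 <= pairing V (B *m B^T).
Proof.
by move=> copV B_ge0; rewrite pairing_mulmx_tr; apply: sumr_ge0 => l _; apply: copV.
Qed.

Lemma pairingC W M : pairing W M = pairing M W.
Proof. by apply: eq_bigr => i _; apply: eq_bigr => k _; rewrite mulrC. Qed.

Lemma pairingDl W1 W2 M : pairing (W1 + W2) M = pairing W1 M + pairing W2 M.
Proof.
rewrite /pairing -big_split; apply: eq_bigr => i _.
by rewrite -big_split; apply: eq_bigr => k _; rewrite mxE mulrDl.
Qed.

Lemma pairingZl a W M : pairing (a *: W) M = a * pairing W M.
Proof.
rewrite /pairing mulr_sumr; apply: eq_bigr => i _.
by rewrite mulr_sumr; apply: eq_bigr => k _; rewrite mxE mulrA.
Qed.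

Lemma pairingBr W M N : pairing W (M - N) = pairing W M - pairing W N.
Proof.
rewrite /pairing -sumrB; apply: eq_bigr => i _.
by rewrite -sumrB; apply: eq_bigr => k _; rewrite !mxE mulrBr.
Qed.

Lemma norm_pairing_le W M (e : R) : (forall i k, `|M i k| <= e) ->
  `|pairing W M| <= (\sum_(i < n) \sum_(k < n) `|W i k|) * e.
Proof.
move=> Me; rewrite /pairing mulr_suml; apply: le_trans (ler_norm_sum _ _ _) _.
apply: ler_sum => i _; rewrite mulr_suml; apply: le_trans (ler_norm_sum _ _ _) _.
by apply: ler_sum => k _; rewrite normrM ler_wpM2l.
Qed.

End QuadraticForms.

Section CyclicForm.
Variable R : rcfType.
Variables c0 c1 c2 c3 c4 d0 d1 d2 d3 d4 : R.

Definition cycq (s0 s1 s2 s3 s4 : R) :=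
  c0 * s0 ^+ 2 + c1 * s1 ^+ 2 + c2 * s2 ^+ 2 + c3 * s3 ^+ 2 + c4 * s4 ^+ 2
  - 2%:R * (d0 * s0 * s1 + d1 * s1 * s2 + d2 * s2 * s3 + d3 * s3 * s4 + d4 * s4 * s0).

Hypotheses (d0_gt0 : 0 < d0) (d1_gt0 : 0 < d1) (d2_gt0 : 0 < d2) (d3_gt0 : 0 < d3)
  (d4_gt0 : 0 < d4).
Hypothesis cycq_ge0 : forall s0 s1 s2 s3 s4, 0 <= cycq s0 s1 s2 s3 s4.

(* Leading principal minors (continuants) of the tridiagonal form in s1, ..., s4. *)
Let k1 := c1.
Let k2 := c2 * k1 - d1 ^+ 2.
Let k3 := c3 * k2 - d2 ^+ 2 * k1.
Let k4 := c4 * k3 - d3 ^+ 2 * k2.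

Lemma continuants_gt0 : [/\ 0 < k1, 0 < k2, 0 < k3 & 0 < k4].
Proof.
have k1_gt0 : 0 < k1.
  apply: (lead_gt0_of_quadratic_ge0 (C := d1) (c := c2)) => // l.
  by have := cycq_ge0 0 l 1 0 0; rewrite /cycq /k1; lra.
have k2_gt0 : 0 < k2.
  rewrite -(pmulr_rgt0 _ k1_gt0).
  apply: (lead_gt0_of_quadratic_ge0 (C := d2 * k1) (c := c3)) => [|l]; first exact: mulr_gt0.
  by have := cycq_ge0 0 (l * d1) (l * k1) 1 0; rewrite /cycq /k2 /k1; lra.
have k3_gt0 : 0 < k3.
  rewrite -(pmulr_rgt0 _ k2_gt0).
  apply: (lead_gt0_of_quadratic_ge0 (C := d3 * k2) (c := c4)) => [|l]; first exact: mulr_gt0.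
  have := cycq_ge0 0 (l * (d1 * d2)) (l * (d2 * k1)) (l * k2) 1.
  by rewrite /cycq /k3 /k2 /k1; lra.
split => //; rewrite -(pmulr_rgt0 _ k3_gt0).
apply: (lead_gt0_of_quadratic_ge0 (C := d4 * k3 + d0 * (d1 * d2 * d3)) (c := c0)) => [|l].
  by rewrite addr_gt0 ?mulr_gt0.
have := cycq_ge0 1 (l * (d1 * d2 * d3)) (l * (d2 * d3 * k1)) (l * (d3 * k2)) (l * k3).
by rewrite /cycq /k4 /k3 /k2 /k1; lra.
Qed.

(* With w0 = t and w(i+1) = p(i+1) t / p(i) t (p0 t = t) the first four relations of
   [cyclic_form_factor] hold; the fifth one is [closing t = 0]. *)
Let p1 t := c1 * t - d0 ^+ 2.
Let p2 t := c2 * p1 t - d1 ^+ 2 * t.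
Let p3 t := c3 * p2 t - d2 ^+ 2 * p1 t.
Let p4 t := c4 * p3 t - d3 ^+ 2 * p2 t.
Let closing t := (c0 - t) * p4 t - d4 ^+ 2 * p3 t.

Lemma numerators_gt0 t : 0 < p4 t -> [/\ 0 < t, 0 < p1 t, 0 < p2 t & 0 < p3 t].
Proof.
have [k1_gt0 k2_gt0 k3_gt0 k4_gt0] := continuants_gt0 => p4_gt0.
have p3_gt0 : 0 < p3 t.
  apply: (gt0_of_wronskian k3_gt0 k4_gt0 p4_gt0 (e := d0 * d1 * d2 * d3)).
  by rewrite /p4 /p3 /p2 /p1 /k4 /k3 /k2 /k1; ring.
have p2_gt0 : 0 < p2 t.
  apply: (gt0_of_wronskian k2_gt0 k3_gt0 p3_gt0 (e := d0 * d1 * d2)).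
  by rewrite /p3 /p2 /p1 /k3 /k2 /k1; ring.
have p1_gt0 : 0 < p1 t.
  apply: (gt0_of_wronskian k1_gt0 k2_gt0 p2_gt0 (e := d0 * d1)).
  by rewrite /p2 /p1 /k2 /k1; ring.
split=> //; apply: (gt0_of_wronskian ltr01 k1_gt0 p1_gt0 (e := d0)).
by rewrite /p1 /k1; ring.
Qed.

Lemma p4_affine t : p4 t = p4 0 + k4 * t.
Proof. by rewrite /p4 /p3 /p2 /p1 /k4 /k3 /k2 /k1; ring. Qed.

Lemma closing_quadratic t :
  closing t = - k4 * t ^+ 2 + (c0 * k4 - p4 0 - d4 ^+ 2 * k3) * t
              + (c0 * p4 0 - d4 ^+ 2 * p3 0).
Proof. by rewrite /closing /p4 /p3 /p2 /p1 /k4 /k3 /k2 /k1; ring. Qed.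

Lemma cycq_along_numerators t :
  cycq (p4 t) (d1 * d2 * d3 * d4 * t) (d2 * d3 * d4 * p1 t) (d3 * d4 * p2 t) (d4 * p3 t)
  = t * (p4 t - d0 * d1 * d2 * d3 * d4) ^+ 2 + p4 t * closing t.
Proof. by rewrite /cycq /closing /p4 /p3 /p2 /p1; ring. Qed.

Lemma cyclic_form_factor : exists w0 w1 w2 w3 w4 : R,
  [/\ 0 < w0, 0 < w1, 0 < w2, 0 < w3 & 0 < w4] /\
  [/\ c1 * w0 = w1 * w0 + d0 ^+ 2, c2 * w1 = w2 * w1 + d1 ^+ 2,
      c3 * w2 = w3 * w2 + d2 ^+ 2, c4 * w3 = w4 * w3 + d3 ^+ 2
    & c0 * w4 = w0 * w4 + d4 ^+ 2].
Proof.
have [_ _ k3_gt0 k4_gt0] := continuants_gt0.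
pose D := d0 * d1 * d2 * d3 * d4.
have D_gt0 : 0 < D by rewrite !mulr_gt0.
(* At [p4 t1 = D] the square in [cycq_along_numerators] vanishes, so [closing t1 >= 0]. *)
have [t1 p4t1] : exists t1, p4 t1 = D.
  by exists ((D - p4 0) / k4); rewrite p4_affine mulrC divfK ?gt_eqF //; ring.
have [ts t1_le closing_ts] : exists2 ts, t1 <= ts & closing ts = 0.
  have := cycq_ge0 (p4 t1) (d1 * d2 * d3 * d4 * t1) (d2 * d3 * d4 * p1 t1)
    (d3 * d4 * p2 t1) (d4 * p3 t1).
  rewrite cycq_along_numerators p4t1 subrr expr0n mulr0 add0r pmulr_rge0 //.
  rewrite closing_quadratic => /(concave_quadratic_root k4_gt0) [ts t1_le root_ts].
  by exists ts; rewrite // closing_quadratic.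
have p4_gt0 : 0 < p4 ts.
  have := ler_wpM2l (ltW k4_gt0) t1_le; have := p4_affine ts; have := p4_affine t1.
  lra.
have [ts_gt0 p1_gt0 p2_gt0 p3_gt0] := numerators_gt0 p4_gt0.
exists ts, (p1 ts / ts), (p2 ts / p1 ts), (p3 ts / p2 ts), (p4 ts / p3 ts).
split; first by split; rewrite ?divr_gt0.
split.
- by rewrite /p1; field; rewrite gt_eqF.
- by rewrite /p2; field; rewrite !gt_eqF.
- by rewrite /p3; field; rewrite !gt_eqF.
- by rewrite /p4; field; rewrite !gt_eqF.
have closing_eq : (c0 - ts) * p4 ts = d4 ^+ 2 * p3 ts.
  by apply/eqP; rewrite -subr_eq0; apply/eqP.
rewrite -[d4 ^+ 2](mulfK (lt0r_neq0 p3_gt0)) -closing_eq.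
by field; rewrite gt_eqF.
Qed.

End CyclicForm.

Definition o0 : 'I_5 := @Ordinal 5 0 isT.
Definition o1 : 'I_5 := @Ordinal 5 1 isT.
Definition o2 : 'I_5 := @Ordinal 5 2 isT.
Definition o3 : 'I_5 := @Ordinal 5 3 isT.
Definition o4 : 'I_5 := @Ordinal 5 4 isT.

Lemma big_ord5 (V : nmodType) (F : 'I_5 -> V) :
  \sum_(i < 5) F i = F o0 + F o1 + F o2 + F o3 + F o4.
Proof.
rewrite !big_ord_recr big_ord0 /= add0r.
by congr (_ + _ + _ + _ + _); congr F; apply: val_inj.
Qed.

Lemma ord5_ind (P : 'I_5 -> Prop) :
  P o0 -> P o1 -> P o2 -> P o3 -> P o4 -> forall i, P i.
Proof.
by move=> ? ? ? ? ? [[|[|[|[|[|i]]]]] lti] //; rewrite (bool_irrelevance lti isT).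
Qed.

Section HornForm.
Variable R : realType.
Implicit Types (W : 'M[R]_5) (b : 'I_5 -> R).

Definition hornq (x0 x1 x2 x3 x4 : R) :=
  x0 ^+ 2 + x1 ^+ 2 + x2 ^+ 2 + x3 ^+ 2 + x4 ^+ 2
  - 2%:R * (x0 * x1 + x1 * x2 + x2 * x3 + x3 * x4 + x4 * x0)
  + 2%:R * (x0 * x2 + x1 * x3 + x2 * x4 + x3 * x0 + x4 * x1).

Lemma norm_Horn_le1 i k : `|Horn R i k| <= 1.
Proof. by elim/ord5_ind: i; elim/ord5_ind: k; rewrite mxE /= ?normrN normr1. Qed.

Lemma qform_Horn b : qform (Horn R) b = hornq (b o0) (b o1) (b o2) (b o3) (b o4).
Proof. by rewrite /qform /bilform !big_ord5 !mxE /= /hornq; ring. Qed.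

Lemma hornq_near_zero (x0 x1 x2 x3 x4 : R) :
  0 <= x0 -> 0 <= x1 -> 0 <= x2 -> 0 <= x3 -> 0 <= x4 ->
  x3 + x4 <= x0 + x1 -> x3 + x4 <= x1 + x2 -> x3 + x4 <= x2 + x3 -> x3 + x4 <= x4 + x0 ->
  (x1 - (x0 + x2)) ^+ 2 + x3 ^+ 2 + x4 ^+ 2 <= 2%:R * hornq x0 x1 x2 x3 x4.
Proof.
(* Invariant under the reflection (x0, x1, x2, x3, x4) -> (x2, x1, x0, x4, x3). *)
wlog x34 : x0 x2 x3 x4 / x3 <= x4 => [main | ] h0 h1 h2 h3 h4 m01 m12 m23 m40.
  have [|x43] := lerP x3 x4; first by move=> x34; apply: main.
  have := main x2 x0 x4 x3 (ltW x43) h2 h1 h0 h4 h3.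
  by rewrite /hornq; lra.
have -> : hornq x0 x1 x2 x3 x4 =
    (x0 - x1 + x2 + x3 - x4) ^+ 2 + 4%:R * x1 * x3 + 4%:R * x2 * (x4 - x3).
  by rewrite /hornq; ring.
have x24_x43 : 0 <= (x2 - x4) * (x4 - x3) by apply: mulr_ge0; lra.
have x3_x43 : 0 <= x3 * (x4 - x3) by apply: mulr_ge0; lra.
have := sqr_ge0 ((x0 - x1 + x2 + x3 - x4) - (x4 - x3)).
have [x31|x13] := lerP x3 x1; last by nra.
have x13_x3 : 0 <= (x1 - x3) * x3 by apply: mulr_ge0; lra.
nra.
Qed.

Definition horn_zero (j : nat) (a c : R) (i : 'I_5) : R :=
  nth 0 (match j with
         | 0 => [:: a; a + c; c; 0; 0] | 1 => [:: 0; a; a + c; c; 0]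
         | 2 => [:: 0; 0; a; a + c; c] | 3 => [:: c; 0; 0; a; a + c]
         | _ => [:: a + c; c; 0; 0; a] end) i.

Definition nonneg_on_horn_zeros W :=
  forall j a c, 0 <= a -> 0 <= c -> 0 <= qform W (horn_zero j a c).

Lemma horn_zero_approx b : (forall i, 0 <= b i) ->
  exists j a c, [/\ 0 <= a, 0 <= c,
    sqnorm (fun i => b i - horn_zero j a c i) <= 2%:R * qform (Horn R) b &
    sqnorm (horn_zero j a c) <= 3%:R * sqnorm b].
Proof.
move=> b_ge0; rewrite qform_Horn.
(* [pair_sum j] is the mass of [b] off the support of [horn_zero j]. *)
pose pair_sum (i : 'I_5) := nth 0 [:: b o3 + b o4; b o4 + b o0; b o0 + b o1;
  b o1 + b o2; b o2 + b o3] i.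
have [j _ j_min] := @arg_minP _ _ _ o0 xpredT pair_sum isT.
have h0 := b_ge0 o0; have h1 := b_ge0 o1; have h2 := b_ge0 o2; have h3 := b_ge0 o3;
have h4 := b_ge0 o4.
have := j_min o0 isT; have := j_min o1 isT; have := j_min o2 isT; have := j_min o3 isT;
have := j_min o4 isT; rewrite /pair_sum; move: j {j_min}.
apply: ord5_ind => /= q4 q3 q2 q1 q0; [
  have near := hornq_near_zero h0 h1 h2 h3 h4 q2 q3 q4 q1; have ac := sqr_ge0 (b o0 - b o2);
    exists 0%N, (b o0), (b o2) |
  have near := hornq_near_zero h1 h2 h3 h4 h0 q3 q4 q0 q2; have ac := sqr_ge0 (b o1 - b o3);
    exists 1%N, (b o1), (b o3) |
  have near := hornq_near_zero h2 h3 h4 h0 h1 q4 q0 q1 q3; have ac := sqr_ge0 (b o2 - b o4);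
    exists 2%N, (b o2), (b o4) |
  have near := hornq_near_zero h3 h4 h0 h1 h2 q0 q1 q2 q4; have ac := sqr_ge0 (b o3 - b o0);
    exists 3%N, (b o3), (b o0) |
  have near := hornq_near_zero h4 h0 h1 h2 h3 q1 q2 q3 q0; have ac := sqr_ge0 (b o4 - b o1);
    exists 4%N, (b o4), (b o1)].
all: split => //; rewrite /sqnorm !big_ord5 /horn_zero /=; rewrite /hornq in near *; [lra | nra].
Qed.

Lemma copositive_Horn_perturbation W (m d : R) :
  (forall i k, `|W i k| <= m) -> nonneg_on_horn_zeros W -> 0 <= d ->
  copositive (d *: W + (10%:R * m) *: (Horn R + d ^+ 2 *: 1%:M)).
Proof.
move=> Wm W_zeros d_ge0 b b_ge0.
have m_ge0 : 0 <= m := le_trans (normr_ge0 _) (Wm o0 o0).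
have [j [a [c [a_ge0 c_ge0 res_le zero_le]]]] := horn_zero_approx b_ge0.
set z := horn_zero j a c in res_le zero_le.
set r := (fun i => b i - z i) in res_le.
have Wz_ge0 : 0 <= d * qform W z by apply: mulr_ge0 => //; apply: W_zeros.
have left_le := bilform_lbound r b Wm d_ge0.
have WTm i k : `|W^T i k| <= m by rewrite mxE.
have right_le := bilform_lbound r z WTm d_ge0; rewrite bilform_tr in right_le.
have res_m := ler_wpM2l m_ge0 res_le.
have zero_m := ler_wpM2l (mulr_ge0 m_ge0 (sqr_ge0 d)) zero_le.
have := sqnorm_ge0 r.
rewrite qformD !qformZ qformD qformZ qform1 (qform_split W b z) -/r.
lra.
Qed.

End HornForm.

Section HornFace.
Variable R : realType.
Implicit Types (V W M A : 'M[R]_5).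

Lemma frob_pairing M N : frob M N = pairing N M.
Proof.
rewrite /frob /pairing /mxtrace.
under eq_bigr => i _ do rewrite mxE; under eq_bigr => i _ do under eq_bigr => k _ do
  rewrite mxE mulrC.
by rewrite exchange_big.
Qed.

Lemma entry_le_fnorm M i k : `|M i k| <= fnorm M.
Proof.
rewrite /fnorm -sqrtr_sqr ler_wsqrtr // frob_pairing /pairing (bigD1 i) //= (bigD1 k) //=.
rewrite -expr2 -[X in X <= _]addr0 -addrA lerD2l addr_ge0 //.
  by apply: sumr_ge0 => j _; rewrite -expr2 sqr_ge0.
by apply: sumr_ge0 => j _; apply: sumr_ge0 => l _; rewrite -expr2 sqr_ge0.
Qed.

Lemma pairing_ge0_closure V A :
  copositive V -> closure5 (@CP5 R) A -> 0 <= pairing V A.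
Proof.
move=> copV [_ A_lim].
apply: (ge0_of_ge_linear (K := \sum_(i < 5) \sum_(k < 5) `|V i k|)) => e e_gt0.
have [X [_ [[l [B [B_ge0 ->]]] XA_lt]]] := A_lim e e_gt0.
have XA_le i k : `|(B *m B^T - A) i k| <= e.
  exact: le_trans (entry_le_fnorm _ i k) (ltW XA_lt).
have := norm_pairing_le V XA_le; rewrite pairingBr ler_norml => /andP[_].
have := pairing_ge0_mulmx_tr copV B_ge0.
lra.
Qed.

Lemma pairing_ge0_horn_face W (m : R) A :
  (forall i k, `|W i k| <= m) -> nonneg_on_horn_zeros W ->
  closure5 (@CP5 R) A -> pairing (Horn R) A = 0 -> 0 <= pairing W A.
Proof.
move=> Wm W_zeros A_cl HA0.
apply: (ge0_of_ge_linear (K := 10%:R * m * pairing 1%:M A)) => d d_gt0.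
have := pairing_ge0_closure (copositive_Horn_perturbation Wm W_zeros (ltW d_gt0)) A_cl.
rewrite !(pairingDl, pairingZl) HA0 add0r.
have -> : d * pairing W A + 10%:R * m * (d ^+ 2 * pairing 1%:M A) =
          d * (pairing W A + 10%:R * m * pairing 1%:M A * d) by ring.
by rewrite pmulr_rge0 //; lra.
Qed.

Lemma pairing_eq0_horn_face W (m : R) A :
  (forall i k, `|W i k| <= m) -> (forall j a c, qform W (horn_zero j a c) = 0) ->
  closure5 (@CP5 R) A -> pairing (Horn R) A = 0 -> pairing W A = 0.
Proof.
move=> Wm W_zeros A_cl HA0; apply/eqP; rewrite eq_le; apply/andP; split.
  rewrite -oppr_ge0 -mulN1r -pairingZl.
  apply: (pairing_ge0_horn_face (m := m)) => // [i k|j a c _ _].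
    by rewrite mxE mulN1r normrN.
  by rewrite qformZ W_zeros mulr0.
by apply: (pairing_ge0_horn_face Wm) => // j a c _ _; rewrite W_zeros.
Qed.

Definition Horn_row (j : 'I_5) : 'M[R]_5 := \matrix_(i, k) ((i == j)%:R * Horn R i k).

Lemma Horn_row_orth A j : closure5 (@CP5 R) A -> pairing (Horn R) A = 0 ->
  \sum_(k < 5) Horn R j k * A j k = 0.
Proof.
move=> A_cl HA0.
have <- : pairing (Horn_row j) A = \sum_(k < 5) Horn R j k * A j k.
  rewrite /pairing (bigD1 j) //= [X in _ + X]big1 ?addr0.
    by apply: eq_bigr => k _; rewrite mxE eqxx mul1r.
  by move=> i /negPf nij; apply: big1 => k _; rewrite mxE nij !mul0r.
apply: (pairing_eq0_horn_face (m := 1)) => // [i k|j' a c].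
  by rewrite mxE normrM; case: (i == j); rewrite ?normr1 ?normr0 ?mul1r ?mul0r ?norm_Horn_le1.
rewrite /qform /bilform !big_ord5 !mxE /horn_zero.
by elim/ord5_ind: j; case: j' => [|[|[|[|j']]]] /=; ring.
Qed.

(* At the zero [horn_zero j a c] the form of [cyc_weight s] is (a s_j - c s_(j+1))^2. *)
Definition cyc_weight (s0 s1 s2 s3 s4 : R) : 'M[R]_5 := \matrix_(i, k)
  match val i, val k with
  | 0, 1 => s0 ^+ 2 | 1, 2 => s1 ^+ 2 | 2, 3 => s2 ^+ 2 | 3, 4 => s3 ^+ 2 | 4, 0 => s4 ^+ 2
  | 0, 2 => - (s0 + s1) ^+ 2 | 1, 3 => - (s1 + s2) ^+ 2 | 2, 4 => - (s2 + s3) ^+ 2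
  | 3, 0 => - (s3 + s4) ^+ 2 | 4, 1 => - (s4 + s0) ^+ 2
  | _, _ => 0
  end.

Definition horn_face_form A := cycq
  (A o0 o1 - A o0 o2 - A o4 o1) (A o1 o2 - A o1 o3 - A o0 o2) (A o2 o3 - A o2 o4 - A o1 o3)
  (A o3 o4 - A o3 o0 - A o2 o4) (A o4 o0 - A o4 o1 - A o3 o0)
  (A o0 o2) (A o1 o3) (A o2 o4) (A o3 o0) (A o4 o1).

Lemma horn_face_form_ge0 A : closure5 (@CP5 R) A -> pairing (Horn R) A = 0 ->
  forall s0 s1 s2 s3 s4, 0 <= horn_face_form A s0 s1 s2 s3 s4.
Proof.
move=> A_cl HA0 s0 s1 s2 s3 s4.
have -> : horn_face_form A s0 s1 s2 s3 s4 = pairing (cyc_weight s0 s1 s2 s3 s4) A.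
  by rewrite /horn_face_form /cycq /pairing !big_ord5 !mxE /=; ring.
pose m := 2%:R * (s0 ^+ 2 + s1 ^+ 2 + s2 ^+ 2 + s3 ^+ 2 + s4 ^+ 2).
apply: (pairing_ge0_horn_face (m := m) _ _ A_cl HA0) => [i k | j a c _ _].
  have := sqr_ge0 s0; have := sqr_ge0 s1; have := sqr_ge0 s2; have := sqr_ge0 s3;
  have := sqr_ge0 s4; have := sqr_ge0 (s0 - s1); have := sqr_ge0 (s1 - s2);
  have := sqr_ge0 (s2 - s3); have := sqr_ge0 (s3 - s4); have := sqr_ge0 (s4 - s0).
  rewrite /m => *; elim/ord5_ind: i; elim/ord5_ind: k; rewrite mxE /= ?normrN ?normr0;
    rewrite ?ger0_norm ?sqr_ge0 //; nra.
rewrite /qform /bilform !big_ord5 !mxE /horn_zero.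
case: j => [|[|[|[|j]]]] /=; [have := sqr_ge0 (a * s0 - c * s1)
  | have := sqr_ge0 (a * s1 - c * s2) | have := sqr_ge0 (a * s2 - c * s3)
  | have := sqr_ge0 (a * s3 - c * s4) | have := sqr_ge0 (a * s4 - c * s0)]; lra.
Qed.

Lemma interior_DNN_offdiag_gt0 (A : 'M[R]_5) i k :
  symmetric5 A -> interior5 (@DNN5 R) A -> i != k -> 0 < A i k.
Proof.
move=> A_sym [_ [e [e_gt0 near_DNN]]] ik.
have E_sq : pairing (delta_mx i k + delta_mx k i : 'M[R]_5) (delta_mx i k + delta_mx k i)
    = 2%:R.
  by move: ik; elim/ord5_ind: i; elim/ord5_ind: k; rewrite ?eqxx // => _;
    rewrite /pairing !big_ord5 !mxE /=; ring.
pose E : 'M[R]_5 := delta_mx i k + delta_mx k i.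
pose X := A - (e / 4%:R) *: E.
have X_sym : symmetric5 X.
  by rewrite /symmetric5 linearB linearZ linearD /= A_sym !trmx_delta [_ + delta_mx i k]addrC.
have X_near : fnorm (X - A) < e.
  rewrite /X addrAC subrr add0r -scaleNr /fnorm frob_pairing.
  rewrite pairingZl pairingC pairingZl E_sq.
  rewrite -[e in _ < e](ger0_norm (ltW e_gt0)) -sqrtr_sqr ltr_sqrt ?exprn_gt0 //.
  nra.
have [_ X_ge0] := near_DNN X X_sym X_near.
have := X_ge0 i k; rewrite /X !mxE !eqxx (negPf ik) /=.
have : 0 < e / 4%:R by rewrite divr_gt0.
lra.
Qed.

Lemma Ymat_diag_mul_tr (y1 y2 y3 y4 y5 z1 z2 z3 z4 z5 : R) :
  (Ymat y1 y2 y3 y4 y5 *m diag5 z1 z2 z3 z4 z5) *m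
    (Ymat y1 y2 y3 y4 y5 *m diag5 z1 z2 z3 z4 z5)^T =
  Ymat y1 y2 y3 y4 y5 *m diag5 (z1 ^+ 2) (z2 ^+ 2) (z3 ^+ 2) (z4 ^+ 2) (z5 ^+ 2)
    *m (Ymat y1 y2 y3 y4 y5)^T.
Proof.
rewrite trmx_mul /diag5 tr_diag_mx !mulmxA -[_ *m diag_mx _ *m diag_mx _]mulmxA.
congr (_ *m _ *m _); apply/matrixP => a b; rewrite !mxE big_ord5 !mxE.
by elim/ord5_ind: a; elim/ord5_ind: b; rewrite /= ?mulr0n ?mulr1n; ring.
Qed.

Lemma div_relation (c d w w' : R) : 0 < w -> c * w = w' * w + d ^+ 2 ->
  d = w * (d / w) /\ c = w' + w * (d / w) ^+ 2.
Proof.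
move=> w_gt0 rel; have w_neq0 := lt0r_neq0 w_gt0.
split; first by rewrite mulrC divfK.
by apply: (mulIf w_neq0); rewrite rel; field.
Qed.

Lemma Ymat_factor_of_relations (A : 'M[R]_5) (w0 w1 w2 w3 w4 y1 y2 y3 y4 y5 : R) :
  symmetric5 A -> (forall j, \sum_(k < 5) Horn R j k * A j k = 0) ->
  [/\ A o0 o2 = w0 * y1, A o1 o3 = w1 * y2, A o2 o4 = w2 * y3, A o3 o0 = w3 * y4
    & A o4 o1 = w4 * y5] ->
  [/\ A o1 o2 - A o1 o3 - A o0 o2 = w1 + w0 * y1 ^+ 2,
      A o2 o3 - A o2 o4 - A o1 o3 = w2 + w1 * y2 ^+ 2,
      A o3 o4 - A o3 o0 - A o2 o4 = w3 + w2 * y3 ^+ 2,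
      A o4 o0 - A o4 o1 - A o3 o0 = w4 + w3 * y4 ^+ 2
    & A o0 o1 - A o0 o2 - A o4 o1 = w0 + w4 * y5 ^+ 2] ->
  A = Ymat y1 y2 y3 y4 y5 *m diag5 w0 w1 w2 w3 w4 *m (Ymat y1 y2 y3 y4 y5)^T.
Proof.
move=> A_sym rows [d0 d1 d2 d3 d4] [c1 c2 c3 c4 c0].
have sym i k : A k i = A i k by rewrite -{2}A_sym mxE.
have := rows o0; have := rows o1; have := rows o2; have := rows o3; have := rows o4.
rewrite !big_ord5 !mxE /= => r4 r3 r2 r1 r0.
have s01 := sym o0 o1; have s02 := sym o0 o2; have s03 := sym o0 o3;
have s04 := sym o0 o4; have s12 := sym o1 o2; have s13 := sym o1 o3;
have s14 := sym o1 o4; have s23 := sym o2 o3; have s24 := sym o2 o4;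
have s34 := sym o3 o4.
(* Once the relations are available, every entry identity is linear in the entries of A. *)
apply/matrixP => i k; rewrite !(mxE, big_ord5).
elim/ord5_ind: i; elim/ord5_ind: k; rewrite /= ?mulr0n ?mulr1n; lra.
Qed.

End HornFace.

Theorem lemma2p4 (R : realType) (A : 'M[R]_5) :
  symmetric5 A ->
  frob A (Horn R) = 0 ->
  boundary5 (@CP5 R) A ->
  interior5 (@DNN5 R) A ->
  exists y1 y2 y3 y4 y5 z1 z2 z3 z4 z5 : R,
    [/\ 0 < y1, 0 < y2, 0 < y3, 0 < y4 & 0 < y5] /\
    [/\ 0 < z1, 0 < z2, 0 < z3, 0 < z4 & 0 < z5] /\
    let B := Ymat y1 y2 y3 y4 y5 *m diag5 z1 z2 z3 z4 z5 in
    A = B *m B^T.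
Proof.
move=> A_sym HA [A_cl _] A_int.
have HA0 : pairing (Horn R) A = 0 by rewrite -frob_pairing.
have d_gt0 i k : i != k -> 0 < A i k by apply: interior_DNN_offdiag_gt0.
have [w0 [w1 [w2 [w3 [w4 [[w0_gt0 w1_gt0 w2_gt0 w3_gt0 w4_gt0] [e1 e2 e3 e4 e0]]]]]]] :=
  cyclic_form_factor (d_gt0 o0 o2 isT) (d_gt0 o1 o3 isT) (d_gt0 o2 o4 isT)
    (d_gt0 o3 o0 isT) (d_gt0 o4 o1 isT) (horn_face_form_ge0 A_cl HA0).
exists (A o0 o2 / w0), (A o1 o3 / w1), (A o2 o4 / w2), (A o3 o0 / w3), (A o4 o1 / w4).
exists (Num.sqrt w0), (Num.sqrt w1), (Num.sqrt w2), (Num.sqrt w3), (Num.sqrt w4).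
split; first by split; rewrite divr_gt0 ?d_gt0.
split; first by split; rewrite sqrtr_gt0.
rewrite /= Ymat_diag_mul_tr !sqr_sqrtr ?ltW //.
have [d0E c1E] := div_relation w0_gt0 e1; have [d1E c2E] := div_relation w1_gt0 e2;
have [d2E c3E] := div_relation w2_gt0 e3; have [d3E c4E] := div_relation w3_gt0 e4;
have [d4E c0E] := div_relation w4_gt0 e0.
by apply: Ymat_factor_of_relations => // j; apply: Horn_row_orth.
Qed.
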